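(* Let $m=2^\alpha\beta$ be a positive integer with $\beta$ odd. Then, as operators on meromorphic functions on the upper half-plane invariant under $\Gamma_0(2)^+$, $$\tilde{\mathbf{T}}_m=\sum_{\substack{r^2\mid m\\ r\ \text{odd}}}\ \sum_{i=0}^{\alpha}\mathbf{T}_{m/(r^22^i)},$$ where the outer sum is over positive odd integers $r$ with $r^2\mid m$.
   Context: Matrices act on the upper half-plane by Möbius transformations. $\Gamma_0(2)$ is the group of integer matrices $\begin{bmatrix}a&b\\c&d\end{bmatrix}$ of determinant $1$ with $c$ even, $w_2=2^{-1/2}\begin{bmatrix}0&-1\\2&0\end{bmatrix}$, and $\Gamma_0(2)^+$ is generated by $\Gamma_0(2)$ and $w_2$. For a positive integer $n$ define $M^n=M_1^n\cup S_1^n\cup S_2^n$ with $M_1^n=\{\begin{bmatrix}x&y\\0&z\end{bmatrix}: x,y,z\in\mathbb{Z},\ xz=n,\ 0\leq y<z,\ \gcd(x,y,z)=1,\ x\text{ odd}\}$, $S_1^n=\{\begin{bmatrix}x&y\\0&z\end{bmatrix}: xz=n,\ 0\leq y<z,\ \gcd(x,y,z)=1,\ z\text{ odd}\}$, $S_2^n=\{2^{-1/2}\begin{bmatrix}x&y\\0&z\end{bmatrix}: xz=2n,\ 0\leq y<z,\ \gcd(x,y,z)=1,\ x,z\text{ even}\}$ (all with $x,z>0$). Operators: $\mathbf{T}_nf(\tau)=\sum_{\gamma\in M^n}f(\gamma\tau)$, and $\tilde{\mathbf{T}}_nf(\tau)=\sum_{xz=n,\,0\leq y<z}f\big(\frac{x\tau+y}{z}\big)$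 if $n$ is odd, while for $n$ even $\tilde{\mathbf{T}}_nf(\tau)=\sum_{xz=n,\,0\leq y<z}f\big(\frac{x\tau+y}{z}\big)+\sum_{xz=2n,\ x,z\text{ even},\ 0\leq y<z}f\big(\frac{x\tau+y}{z}\big)$, sums over integers $x,z>0$, $y$. *)

From HB Require Import structures.
From mathcomp Require Import all_boot all_order all_algebra.
From mathcomp Require Import reals.
From mathcomp.real_closed Require Import complex.
Set Implicit Arguments. Unset Strict Implicit. Unset Printing Implicit Defensive.
Import Order.TTheory GRing.Theory Num.Theory.
Local Open Scope ring_scope.

Section Defs.
Variable R : realType.
Local Notation C := R[i].

Definition toC (r : R) : C := Complex r 0.

Definition upper (t : C) : Prop := 0 < complex.Im t.

Definition mx22 (a b c d : R) : 'M[R]_2 :=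
  \matrix_(i < 2, j < 2)
    if val i == 0%N then (if val j == 0%N then a else b)
    else (if val j == 0%N then c else d).

Definition mobius (g : 'M[R]_2) (t : C) : C :=
  (toC (g 0 0) * t + toC (g 0 1)) / (toC (g 1 0) * t + toC (g 1 1)).

Definition is_int (r : R) : Prop := exists z : int, r = z%:~R.

Definition Gamma0_2 (g : 'M[R]_2) : Prop :=
  [/\ forall i j, is_int (g i j), \det g = 1 & exists k : int, g 1 0 = (2 * k)%:~R].

Definition w2 : 'M[R]_2 := (Num.sqrt 2)^-1 *: mx22 0 (-1) 2 0.

Inductive Gamma0_2plus : 'M[R]_2 -> Prop :=
| G2p_base g : Gamma0_2 g -> Gamma0_2plus g
| G2p_w2 : Gamma0_2plus w2
| G2p_mul g h : Gamma0_2plus g -> Gamma0_2plus h -> Gamma0_2plus (g *m h)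
| G2p_inv g : Gamma0_2plus g -> Gamma0_2plus (invmx g).

Definition G2p_invariant (f : C -> C) : Prop :=
  forall g, Gamma0_2plus g -> forall t, upper t -> f (mobius g t) = f t.

Definition triples (N : nat) : seq (nat * nat * nat) :=
  flatten [seq flatten [seq [seq (x, y, z) | y <- iota 0 z] | z <- iota 1 N]
          | x <- iota 1 N].

Definition gcd3 (x y z : nat) : nat := gcdn (gcdn x y) z.

Definition M1 (n : nat) : seq 'M[R]_2 :=
  [seq mx22 p.1.1%:R p.1.2%:R 0 p.2%:R | p <- triples n &
     [&& p.1.1 * p.2 == n, p.1.2 < p.2, gcd3 p.1.1 p.1.2 p.2 == 1 & odd p.1.1]]%N.

Definition S1 (n : nat) : seq 'M[R]_2 :=
  [seq mx22 p.1.1%:R p.1.2%:R 0 p.2%:R | p <- triples n &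
     [&& p.1.1 * p.2 == n, p.1.2 < p.2, gcd3 p.1.1 p.1.2 p.2 == 1 & odd p.2]]%N.

Definition S2 (n : nat) : seq 'M[R]_2 :=
  [seq (Num.sqrt 2)^-1 *: mx22 p.1.1%:R p.1.2%:R 0 p.2%:R | p <- triples (2 * n) &
     [&& p.1.1 * p.2 == 2 * n, p.1.2 < p.2, gcd3 p.1.1 p.1.2 p.2 == 1,
         ~~ odd p.1.1 & ~~ odd p.2]]%N.

Definition Mset (n : nat) : seq 'M[R]_2 := undup (M1 n ++ S1 n ++ S2 n).

Definition Top (n : nat) (f : C -> C) (t : C) : C :=
  \sum_(g <- Mset n) f (mobius g t).

Definition evxyz (f : C -> C) (t : C) (p : nat * nat * nat) : C :=
  f ((toC p.1.1%:R * t + toC p.1.2%:R) / toC p.2%:R).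

Definition Ttilde (n : nat) (f : C -> C) (t : C) : C :=
  \sum_(p <- triples n | (p.1.1 * p.2 == n)%N) evxyz f t p
  + (if odd n then 0
     else \sum_(p <- triples (2 * n) |
                [&& p.1.1 * p.2 == 2 * n, ~~ odd p.1.1 & ~~ odd p.2]%N) evxyz f t p).

End Defs.

(* Write a triple (x, y, z) for the map tau |-> (x tau + y) / z.  Scaling a triple by
   d > 0 does not change the map, so grouping the triples with x z = N, 0 <= y < z by
   d = gcd(x, y, z) writes every full sum over level N as a sum over d^2 | N of
   primitive sums at level N / d^2, and T_n is the primitive sum at level n over the
   triples with x or z odd plus the primitive sum at level 2n over the triples with x and
   z even.  Splitting d into its odd part r and a power of 2 gives recursions in N / 4,
   from which T~_(2n) = T~_n + sum_(r odd, r^2 | 2n) T_(2n / r^2) and, for odd n,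
   T~_n = sum_(r odd, r^2 | n) T_(n / r^2); the theorem follows by induction on alpha. *)

From mathcomp Require Import all_boot all_order all_algebra.
From mathcomp Require Import reals.
From mathcomp.real_closed Require Import complex.
From mathcomp Require Import zify.
Import Order.TTheory GRing.Theory Num.Theory.

Set Implicit Arguments.
Unset Strict Implicit.
Unset Printing Implicit Defensive.

Local Notation triple := (nat * nat * nat)%type.

Lemma flatten_map_uniq (S T : eqType) (s : seq S) (G : S -> seq T) (k : T -> S) :
  uniq s -> (forall i, uniq (G i)) -> (forall i a, a \in G i -> k a = i) ->
  uniq (flatten (map G s)).
Proof.
move=> us uG kG; elim: s us => [|i s IH] //= /andP[nis us].
rewrite cat_uniq uG IH // andbT; apply/hasPn => a /flattenP[l /mapP[j js ->]] aj.
apply/negP => ai; move: (kG _ _ ai) (kG _ _ aj) => -> ej.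
by move: nis; rewrite ej js.
Qed.

Lemma mem_triples N x y z :
  ((x, y, z) \in triples N) = [&& 0 < x <= N, 0 < z <= N & y < z].
Proof.
apply/flattenP/idP.
  move=> [l /mapP[x' x'N ->]] /flattenP[l' /mapP[z' z'N ->]] /mapP[y' y'z [-> -> ->]].
  by move: x'N z'N y'z; rewrite !mem_iota; lia.
move=> H; exists (flatten [seq [seq (x, y0, z0) | y0 <- iota 0 z0] | z0 <- iota 1 N]).
  by apply/mapP; exists x => //; rewrite mem_iota; lia.
apply/flattenP; exists [seq (x, y0, z) | y0 <- iota 0 z].
  by apply/mapP; exists z => //; rewrite mem_iota; lia.
by apply/mapP; exists y => //; rewrite mem_iota; lia.
Qed.

Lemma triples_uniq N : uniq (triples N).
Proof.
apply: (flatten_map_uniq (k := fun p : triple => p.1.1)) (iota_uniq 1 N) _ _ => [x|x p].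
  apply: (flatten_map_uniq (k := fun p : triple => p.2)) (iota_uniq 1 N) _ _ => [z|z p].
    by rewrite map_inj_uniq ?iota_uniq // => a b [].
  by case/mapP=> y _ ->.
by case/flattenP=> l /mapP[z _ ->] /mapP[y _ ->].
Qed.

Definition factor_triples N := [seq p <- triples N | p.1.1 * p.2 == N].

Lemma mem_factor_triples N x y z :
  ((x, y, z) \in factor_triples N) = [&& 0 < N, x * z == N & y < z].
Proof.
rewrite mem_filter mem_triples /=; case: eqP => [<-|] /=; last by rewrite andbF.
by rewrite muln_gt0; case: (posnP x) => [->|x0]; case: (posnP z) => [->|z0];
  rewrite ?andbF //= leq_pmulr ?leq_pmull.
Qed.

Lemma factor_triples_uniq N : uniq (factor_triples N).
Proof. exact/filter_uniq/triples_uniq. Qed.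

Definition scale3 d (p : triple) : triple := (d * p.1.1, d * p.1.2, d * p.2).
Definition dvd3 d (p : triple) := [&& d %| p.1.1, d %| p.1.2 & d %| p.2].

Lemma scale3_inj d : 0 < d -> injective (scale3 d).
Proof.
move=> d0 [[x y] z] [[x' y'] z'] [/eqP + /eqP + /eqP].
by rewrite !eqn_pmul2l // => /eqP-> /eqP-> /eqP->.
Qed.

Lemma gcd3_scale3 d x y z : gcd3 (d * x) (d * y) (d * z) = d * gcd3 x y z.
Proof. by rewrite /gcd3 !muln_gcdr. Qed.

Lemma dvd3_gcd3 d x y z : (d %| gcd3 x y z) = dvd3 d (x, y, z).
Proof. by rewrite /gcd3 /dvd3 !dvdn_gcd andbA. Qed.

Lemma perm_filter_dvd3 d N : 0 < d -> d ^ 2 %| N ->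
  perm_eq [seq p <- factor_triples N | dvd3 d p]
          (map (scale3 d) (factor_triples (N %/ d ^ 2))).
Proof.
move=> d0 /dvdnP[k ->]; rewrite mulnK ?expn_gt0 ?d0 //.
apply: uniq_perm; rewrite ?(map_inj_uniq (scale3_inj d0)) ?filter_uniq ?triples_uniq //.
move=> [[x y] z]; rewrite mem_filter /dvd3 /=; apply/andP/mapP => [[]|[[[a b] c]]].
  case/and3P=> /dvdnP[a ->] /dvdnP[b ->] /dvdnP[c ->].
  have d20 : 0 < d ^ 2 by rewrite expn_gt0 d0.
  rewrite mem_factor_triples mulnACA mulnn ltn_pmul2r // eqn_pmul2r // muln_gt0 d20 andbT.
  move=> abc_mem; exists (a, b, c); last by rewrite /scale3 /= ![d * _]mulnC.
  by rewrite mem_factor_triples.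
rewrite mem_factor_triples /scale3 => /and3P[k0 ac bc] [-> -> ->].
rewrite !dvdn_mulr // mem_factor_triples mulnACA mulnn mulnC (eqP ac).
by rewrite ltn_pmul2l // muln_gt0 expn_gt0 d0 k0 eqxx.
Qed.

Definition primitive (p : triple) := gcd3 p.1.1 p.1.2 p.2 == 1.
Definition even_diag (p : triple) := ~~ odd p.1.1 && ~~ odd p.2.

Lemma odd_gcd3 x y z : odd (gcd3 x y z) = ~~ dvd3 2 (x, y, z).
Proof. by rewrite -dvd3_gcd3 dvdn2 negbK. Qed.

Lemma odd_sq_dvd_pow2 r k N : odd r -> (r ^ 2 %| 2 ^ k * N) = (r ^ 2 %| N).
Proof. by move=> r_odd; rewrite Gauss_dvdr // coprimeXl // coprimeXr // coprimen2. Qed.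

Lemma not_dvd4_odd n : odd n -> ~~ (4 %| n) && ~~ (4 %| 2 * n).
Proof.
move=> n_odd; rewrite -[4]/(2 * 2) dvdn_pmul2l // !dvdn2 n_odd andbT.
by apply/negP => /(dvdn_trans (dvdn_mulr 2 (dvdnn 2))); rewrite dvdn2 n_odd.
Qed.

Local Open Scope ring_scope.

Section TripleSums.
Variables (V : zmodType) (F : triple -> V).
Hypothesis F_scale3 : forall d p, (0 < d)%N -> F (scale3 d p) = F p.

Definition triple_sum N (Q : pred triple) := \sum_(p <- factor_triples N | Q p) F p.

Definition oddsq_sum (G : nat -> V) N :=
  \sum_(1 <= r < N.+1 | odd r && (r ^ 2 %| N)%N) G (N %/ r ^ 2)%N.

Lemma big_oddsq_pow2 (G : nat -> V) k N :
  \sum_(1 <= r < (2 ^ k * N).+1 | odd r && (r ^ 2 %| 2 ^ k * N)%N) G r =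
  \sum_(1 <= r < N.+1 | odd r && (r ^ 2 %| N)%N) G r.
Proof.
case: (posnP N) => [->|N_gt0]; first by rewrite muln0.
rewrite [RHS](big_nat_widen _ _ (2 ^ k * N).+1) ?ltnS ?leq_pmull ?expn_gt0 //.
apply: eq_bigl => r; case r_odd: (odd r); rewrite //= odd_sq_dvd_pow2 //.
case r2N: (r ^ 2 %| N)%N; rewrite //= ltnS.
have r_gt0 : (0 < r)%N by case: r r_odd {r2N}.
by rewrite (leq_trans _ (dvdn_leq N_gt0 r2N)) // expnS expn1 leq_pmulr.
Qed.

Lemma oddsq_sum_pow2 (G : nat -> V) k N :
  \sum_(1 <= r < (2 ^ k * N).+1 | odd r && (r ^ 2 %| 2 ^ k * N)%N)
     G (2 ^ k * N %/ (r ^ 2 * 2 ^ k))%N = oddsq_sum G N.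
Proof.
rewrite big_oddsq_pow2; apply: eq_bigr => r _.
by rewrite [(r ^ 2 * _)%N]mulnC divnMl ?expn_gt0.
Qed.

Lemma eq_oddsq_sum (G1 G2 : nat -> V) N : G1 =1 G2 -> oddsq_sum G1 N = oddsq_sum G2 N.
Proof. by move=> eqG; apply: eq_bigr => r _; apply: eqG. Qed.

Lemma oddsq_sumD (G1 G2 : nat -> V) N :
  oddsq_sum (fun k => G1 k + G2 k) N = oddsq_sum G1 N + oddsq_sum G2 N.
Proof. exact: big_split. Qed.

Lemma oddsq_sum_double (G : nat -> V) N :
  oddsq_sum G (2 * N)%N = oddsq_sum (fun k => G (2 * k)%N) N.
Proof.
rewrite /oddsq_sum -[in RHS](big_oddsq_pow2 _ 1) expn1.
apply: eq_bigr => r /andP[r_odd].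
by rewrite (odd_sq_dvd_pow2 1) // => /muln_divA ->.
Qed.

Lemma sum_nat_pred1 m n i (X : V) : (m <= i < n)%N -> \sum_(m <= d < n | i == d) X = X.
Proof.
move=> i_in; rewrite -big_filter.
have -> : [seq d <- index_iota m n | i == d] = [:: i].
  rewrite (eq_filter (a2 := pred1 i)) => [|d]; last by rewrite /= eq_sym.
  by rewrite filter_pred1_uniq ?iota_uniq // mem_index_iota.
by rewrite big_seq1.
Qed.

Lemma triple_sum_dvd3 d N Q : (0 < d)%N ->
  triple_sum N (fun p => Q p && dvd3 d p) =
  if (d ^ 2 %| N)%N then triple_sum (N %/ d ^ 2)%N (fun p => Q (scale3 d p)) else 0.
Proof.
move=> d_gt0; rewrite /triple_sum; case: ifP => dN.
  rewrite (eq_bigl _ _ (fun p => andbC _ _)) -big_filter_cond.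
  rewrite (perm_big _ (perm_filter_dvd3 d_gt0 dN)) big_map.
  by apply: eq_bigr => p _; rewrite F_scale3.
rewrite big_seq_cond big1 // => -[[x y] z].
rewrite mem_factor_triples /dvd3 => /andP[/and3P[_ /eqP xzN _] /andP[_ /and3P[dx _ dz]]].
by move: dN; rewrite -xzN expnS expn1 dvdn_mul.
Qed.

Lemma triple_sum_gcd3 N Q :
  triple_sum N Q = \sum_(1 <= d < N.+1 | (d ^ 2 %| N)%N)
    triple_sum (N %/ d ^ 2)%N (fun p => primitive p && Q (scale3 d p)).
Proof.
rewrite /triple_sum big_seq_cond.
rewrite (eq_bigr (fun p => \sum_(1 <= d < N.+1 | gcd3 p.1.1 p.1.2 p.2 == d) F p));
  last first.
  move=> [[x y] z] /andP[]; rewrite mem_factor_triples => /and3P[N_gt0 /eqP xzN _] _.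
  have [x_gt0 z_gt0] : (0 < x)%N /\ (0 < z)%N by apply/andP; rewrite -muln_gt0 xzN.
  rewrite sum_nat_pred1 // /gcd3 !gcdn_gt0 x_gt0 ltnS -xzN /=.
  by rewrite (leq_trans _ (leq_pmulr x z_gt0)) // dvdn_leq // !(dvdn_trans (dvdn_gcdl _ _)).
rewrite (exchange_big_dep (fun d => d ^ 2 %| N)%N) /=; last first.
  move=> [[x y] z] d /andP[]; rewrite mem_factor_triples => /and3P[_ /eqP <- _] _ /eqP <-.
  by rewrite expnS expn1 dvdn_mul // ?dvdn_gcdr // !(dvdn_trans (dvdn_gcdl _ _)).
rewrite big_nat_cond [RHS]big_nat_cond; apply: eq_bigr => d /andP[/andP[d_gt0 _] dN].
transitivity (triple_sum N (fun p => (Q p && (gcd3 p.1.1 p.1.2 p.2 == d)) && dvd3 d p)).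
  rewrite /triple_sum [RHS]big_seq_cond; apply: eq_bigl => -[[x y] z] /=.
  by rewrite -!andbA; case: eqP => // <-; rewrite -dvd3_gcd3 dvdnn.
rewrite triple_sum_dvd3 // dN; apply: eq_bigl => -[[x y] z].
have dg_eq_d g : ((d * g)%N == d) = (g == 1%N) by rewrite -[X in _ == X]muln1 eqn_pmul2l.
by rewrite /primitive /scale3 /= gcd3_scale3 dg_eq_d andbC.
Qed.

Lemma triple_sum_odd_gcd3 N (Q : pred triple) :
  (forall d p, odd d -> Q (scale3 d p) = Q p) ->
  triple_sum N (fun p => Q p && odd (gcd3 p.1.1 p.1.2 p.2)) =
  oddsq_sum (fun k => triple_sum k (fun p => Q p && primitive p)) N.
Proof.
move=> Q_odd; rewrite triple_sum_gcd3 /oddsq_sum big_mkcondl /=.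
apply: eq_bigr => d _; rewrite /triple_sum; case: ifP => d_odd.
  apply: eq_bigl => -[[x y] z]; rewrite /primitive /scale3 /= gcd3_scale3 oddM d_odd.
  by case: eqP => [->|] /=; rewrite ?andbF ?andbT // (Q_odd _ (x, y, z)).
apply: big_pred0 => -[[x y] z].
by rewrite /primitive /scale3 /= gcd3_scale3 oddM d_odd !andbF.
Qed.

Lemma triple_sum_split N (Q : pred triple) :
  (forall p, Q (scale3 2 p)) -> (forall d p, odd d -> Q (scale3 d p) = Q p) ->
  triple_sum N Q = oddsq_sum (fun k => triple_sum k (fun p => Q p && primitive p)) N
                   + (if (4 %| N)%N then triple_sum (N %/ 4)%N xpredT else 0).
Proof.
move=> Q_2 Q_odd; rewrite /triple_sum (bigID (fun p => odd (gcd3 p.1.1 p.1.2 p.2))) /=.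
rewrite -!/(triple_sum _ _) triple_sum_odd_gcd3 //; congr (_ + _).
transitivity (triple_sum N (fun p => Q p && dvd3 2 p)).
  by apply: eq_bigl => -[[x y] z]; rewrite odd_gcd3 negbK.
by rewrite triple_sum_dvd3 //; case: ifP => //; rewrite /triple_sum (eq_bigl _ _ Q_2).
Qed.

Lemma triple_sum_even_diag_eq0 N (Q : pred triple) :
  (forall p, Q p -> even_diag p) -> ~~ (4 %| N)%N -> triple_sum N Q = 0.
Proof.
move=> Q_even N4; rewrite /triple_sum big_seq_cond big1 // => -[[x y] z].
rewrite mem_factor_triples => /andP[/and3P[_ /eqP xzN _] /Q_even].
rewrite /even_diag /= -!dvdn2 => /andP[/dvdnP[a xa] /dvdnP[c zc]].
by rewrite -xzN xa zc mulnACA (dvdn_mull _ (dvdnn 4)) in N4.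
Qed.

Lemma even_diag_scale3_odd d p : odd d -> even_diag (scale3 d p) = even_diag p.
Proof. by move=> d_odd; rewrite /even_diag /scale3 /= !oddM d_odd. Qed.

Lemma even_diag_scale3_2 p : even_diag (scale3 2 p).
Proof. by rewrite /even_diag /scale3 /= !oddM. Qed.

Lemma triple_sum_all_split N :
  triple_sum N xpredT = oddsq_sum (fun k => triple_sum k primitive) N
                        + (if (4 %| N)%N then triple_sum (N %/ 4)%N xpredT else 0).
Proof. exact: triple_sum_split. Qed.

Lemma triple_sum_even_diag_split N :
  triple_sum N even_diag =
  oddsq_sum (fun k => triple_sum k (fun p => even_diag p && primitive p)) N
  + (if (4 %| N)%N then triple_sum (N %/ 4)%N xpredT else 0).
Proof. exact/triple_sum_split/even_diag_scale3_odd/even_diag_scale3_2. Qed.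

Lemma triple_sum_primitive N :
  triple_sum N primitive =
  triple_sum N (fun p => ~~ even_diag p && primitive p)
  + triple_sum N (fun p => even_diag p && primitive p).
Proof.
rewrite /triple_sum (bigID even_diag) addrC.
by congr (_ + _); apply: eq_bigl => p; rewrite andbC.
Qed.

(* In terms of triples, [tilde_hecke n] is T~_n (its second sum is empty for odd n) and
   [hecke n] is T_n: the matrices of M_1^n and S_1^n are the primitive triples of level n
   with x or z odd, those of S_2^n the primitive triples of level 2n with x and z even. *)
Definition tilde_hecke n := triple_sum n xpredT + triple_sum (2 * n)%N even_diag.

Definition hecke n :=
  triple_sum n (fun p => ~~ even_diag p && primitive p)
  + triple_sum (2 * n)%N (fun p => even_diag p && primitive p).

Lemma tilde_hecke_odd n : odd n -> tilde_hecke n = oddsq_sum hecke n.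
Proof.
move=> n_odd; have /andP[/negbTE n4 /negbTE n24] := not_dvd4_odd n_odd.
rewrite /tilde_hecke triple_sum_all_split triple_sum_even_diag_split n4 n24 !addr0.
rewrite oddsq_sum_double /oddsq_sum -big_split; apply: eq_bigr => r /andP[_ rn].
have k_odd : odd (n %/ r ^ 2) by move: n_odd; rewrite -{1}(divnK rn) oddM => /andP[].
have /andP[k4 _] := not_dvd4_odd k_odd.
rewrite triple_sum_primitive [X in _ + X]triple_sum_even_diag_eq0 ?addr0 //.
by move=> p /andP[].
Qed.

Lemma tilde_hecke_double n :
  tilde_hecke (2 * n)%N = tilde_hecke n + oddsq_sum hecke (2 * n)%N.
Proof.
rewrite /tilde_hecke triple_sum_all_split !triple_sum_even_diag_split.
have -> : (4 %| 2 * (2 * n))%N by rewrite mulnA dvdn_mulr.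
have -> : (2 * (2 * n) %/ 4 = n)%N by rewrite mulnA mulKn.
rewrite [oddsq_sum _ (2 * (2 * n))%N]oddsq_sum_double [oddsq_sum hecke _]oddsq_sumD.
rewrite (eq_oddsq_sum _ triple_sum_primitive) oddsq_sumD.
set OA := oddsq_sum _ _; set OP2 := oddsq_sum _ _; set OP4 := oddsq_sum _ _.
set X := if _ then _ else _; set E := triple_sum n xpredT.
by rewrite -[OA + OP2 + X]addrA addrACA [RHS]addrC [E + _]addrC.
Qed.

Lemma tilde_hecke_pow2 a b : odd b ->
  tilde_hecke (2 ^ a * b)%N = \sum_(0 <= i < a.+1) oddsq_sum hecke (2 ^ (a - i) * b)%N.
Proof.
move=> b_odd; elim: a => [|a IH].
  by rewrite big_nat1 expn0 mul1n tilde_hecke_odd.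
rewrite big_nat_recl // subn0 expnS -mulnA tilde_hecke_double IH addrC.
by congr (_ + _); apply: eq_bigr => i _; rewrite subSS.
Qed.

End TripleSums.

Lemma sqrn_neq_double_sqrn a b : (0 < a)%N -> (a ^ 2 != 2 * b ^ 2)%N.
Proof.
move=> a_gt0; apply/eqP => E.
case: (posnP b) => [b0|b_gt0].
  by move: E; rewrite b0 muln0 => /eqP; rewrite expn_eq0 eqn0Ngt a_gt0.
have := congr1 (logn 2) E.
by rewrite lognM ?expn_gt0 ?b_gt0 // !lognX (@logn_prime 2 2) //; lia.
Qed.

Lemma divMMl (K : fieldType) (c u v : K) : c != 0 -> c * u / (c * v) = u / v.
Proof. by move=> c0; rewrite -mulf_div divff ?mul1r. Qed.

Section Concrete.
Variable R : realType.

Lemma toCM (a b : R) : toC (a * b) = toC a * toC b.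
Proof. exact: (rmorphM (real_complex R)). Qed.

Lemma toC0 : toC (0 : R) = 0.
Proof. exact: (rmorph0 (real_complex R)). Qed.

Lemma toC_eq0 (a : R) : (toC a == 0) = (a == 0).
Proof. by apply/eqP/eqP => [[]|->]. Qed.

Definition upper_mx (p : triple) : 'M[R]_2 := mx22 p.1.1%:R p.1.2%:R 0 p.2%:R.

Lemma mobius_scale_upper_mx (c : R) p t : c != 0 ->
  mobius (c *: upper_mx p) t = (toC p.1.1%:R * t + toC p.1.2%:R) / toC p.2%:R.
Proof.
move=> c0; rewrite /mobius !mxE /= mulr0 !toCM toC0 mul0r add0r.
by rewrite -mulrA -mulrDr divMMl // toC_eq0.
Qed.

Lemma evxyz_scale3 (f : R[i] -> R[i]) t d p :
  (0 < d)%N -> evxyz f t (scale3 d p) = evxyz f t p.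
Proof.
move=> d_gt0; rewrite /evxyz /scale3 /= !natrM !toCM -mulrA -mulrDr divMMl //.
by rewrite toC_eq0 pnatr_eq0 -lt0n.
Qed.

Lemma Ttilde_tilde_hecke (f : R[i] -> R[i]) t n :
  Ttilde n f t = tilde_hecke (evxyz f t) n.
Proof.
rewrite /Ttilde /tilde_hecke /triple_sum big_filter; congr (_ + _).
case: ifP => n_odd; last by rewrite big_filter_cond.
have /andP[_ n24] := not_dvd4_odd n_odd.
by rewrite -/(triple_sum _ _ _) triple_sum_even_diag_eq0.
Qed.

Lemma scale_upper_mx_inj (c : R) : c != 0 -> injective (fun p => c *: upper_mx p).
Proof.
move=> c0 [[x y] z] [[x' y'] z'] /= E.
have := congr1 (fun M : 'M[R]_2 => (M 0 0, M 0 1, M 1 1)) E; rewrite !mxE /=.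
case=> /(mulfI c0)/eqP + /(mulfI c0)/eqP + /(mulfI c0)/eqP.
by rewrite !eqr_nat => /eqP-> /eqP-> /eqP->.
Qed.

Lemma upper_mx_inj : injective upper_mx.
Proof. by move=> p q E; apply: (scale_upper_mx_inj (oner_neq0 R)); rewrite /= !scale1r. Qed.

Lemma sqrt2V_scale_upper_mx_neq p q : (0 < q.1.1)%N ->
  (Num.sqrt 2)^-1 *: upper_mx q != upper_mx p.
Proof.
move=> q_gt0; apply/eqP => /(congr1 (fun M : 'M[R]_2 => M 0 0)); rewrite !mxE /= => E.
have : ((q.1.1 ^ 2)%N%:R : R) = (2 * p.1.1 ^ 2)%N%:R.
  rewrite natrM !natrX -E exprMn exprVn sqr_sqrtr ?ler0n // mulrA mulfV ?mul1r //.
  by rewrite pnatr_eq0.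
by move/eqP; rewrite eqr_nat (negbTE (sqrn_neq_double_sqrn _ q_gt0)).
Qed.

Lemma Top_hecke (f : R[i] -> R[i]) t n : Top n f t = hecke (evxyz f t) n.
Proof.
pose s : R := (Num.sqrt 2)^-1.
have s_neq0 : s != 0 by rewrite invr_eq0 gt_eqF // sqrtr_gt0 ltr0n.
pose A := [seq p <- factor_triples n | ~~ even_diag p && primitive p].
pose B := [seq p <- factor_triples (2 * n)%N | even_diag p && primitive p].
have Mset_perm : perm_eq (Mset R n) (map upper_mx A ++ map (fun p => s *: upper_mx p) B).
  apply: uniq_perm; first exact: undup_uniq.
    rewrite cat_uniq (map_inj_uniq upper_mx_inj) (map_inj_uniq (scale_upper_mx_inj s_neq0)).
    rewrite !filter_uniq ?triples_uniq //= andbT.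
    apply/hasPn => M /mapP[q]; rewrite mem_filter => /andP[_ qB] ->.
    apply/negP => /mapP[p _] /eqP; apply/negP; apply: sqrt2V_scale_upper_mx_neq.
    case: q qB => [[x y] z]; rewrite mem_factor_triples => /and3P[n_gt0 /eqP xz _].
    by move: n_gt0; rewrite -xz muln_gt0 => /andP[].
  move=> M; rewrite mem_undup catA mem_cat [RHS]mem_cat /M1 /S1 /S2 -map_cat.
  congr (_ || _); apply: eq_mem_map => -[[x y] z];
    rewrite ?mem_cat !mem_filter ?mem_triples /even_diag /primitive /=;
    by case: (x * z == _)%N; case: (y < z)%N; case: (gcd3 x y z == 1)%N;
       case: (odd x); case: (odd z); rewrite /= ?andbT ?andbF ?orbF ?orbb.
rewrite /Top (perm_big _ Mset_perm) big_cat !big_map /hecke /triple_sum !big_filter.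
congr (_ + _); apply: eq_bigr => p _; rewrite /evxyz.
  by rewrite -[upper_mx p]scale1r mobius_scale_upper_mx ?oner_neq0.
by rewrite mobius_scale_upper_mx.
Qed.

End Concrete.

Unset Implicit Arguments.

Theorem proposition2p10 (R : realType) (alpha beta : nat) (f : R[i] -> R[i]) :
  odd beta -> G2p_invariant f ->
  forall t : R[i], upper t ->
    Ttilde (2 ^ alpha * beta)%N f t =
    \sum_(1 <= r < (2 ^ alpha * beta).+1 | odd r && (r ^ 2 %| 2 ^ alpha * beta)%N)
      \sum_(0 <= i < alpha.+1) Top (2 ^ alpha * beta %/ (r ^ 2 * 2 ^ i))%N f t.
Proof.
move=> beta_odd _ t _.
rewrite Ttilde_tilde_hecke (tilde_hecke_pow2 (@evxyz_scale3 R f t)) // exchange_big.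
apply: eq_big_nat => i /andP[_]; rewrite ltnS => i_le.
have -> : (2 ^ alpha * beta = 2 ^ i * (2 ^ (alpha - i) * beta))%N.
  by rewrite mulnA -expnD subnKC.
by rewrite -(oddsq_sum_pow2 _ i); apply: eq_bigr => r _; rewrite Top_hecke.
Qed.
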